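(* For any real numbers $a,b$ with $a\neq\pm b$ and any natural number $n\ge1$, \[ \Phi(a,b,2n)=\Phi(a,b,n)\,\Psi(a,b,n). \]
   Context: $\delta(m)=1$ for $m$ odd, $0$ for $m$ even. $\Psi(a,b,n)$, $\Phi(a,b,n)$ are defined by $\Psi(a,b,0)=2$, $\Psi(a,b,1)=1$, $\Psi(a,b,n+1)=(2a-b)^{\delta(n)}\Psi(a,b,n)-a\Psi(a,b,n-1)$ and $\Phi(a,b,0)=0$, $\Phi(a,b,1)=1$, $\Phi(a,b,n+1)=(2a-b)^{\delta(n+1)}\Phi(a,b,n)-a\Phi(a,b,n-1)$ for $n\ge1$. *)

From Stdlib Require Import Reals.
Open Scope R_scope.

Definition delta (m : nat) : nat := if Nat.odd m then 1%nat else 0%nat.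

(* Psi_pair a b n = (Psi(a,b,n), Psi(a,b,n+1)) *)
Fixpoint Psi_pair (a b : R) (n : nat) : R * R :=
  match n with
  | O => (2, 1)
  | S m => let (p0, p1) := Psi_pair a b m in
           (p1, (2*a - b) ^ (delta (S m)) * p1 - a * p0)
  end.

Definition Psi (a b : R) (n : nat) : R := fst (Psi_pair a b n).

(* Phi_pair a b n = (Phi(a,b,n), Phi(a,b,n+1)) *)
Fixpoint Phi_pair (a b : R) (n : nat) : R * R :=
  match n with
  | O => (0, 1)
  | S m => let (p0, p1) := Phi_pair a b m in
           (p1, (2*a - b) ^ (delta (S (S m))) * p1 - a * p0)
  end.

Definition Phi (a b : R) (n : nat) : R := fst (Phi_pair a b n).

Lemma Psi_rec a b n : (1 <= n)%nat ->
  Psi a b (S n) = (2*a - b) ^ (delta n) * Psi a b n - a * Psi a b (pred n).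
Proof.
  intros H. destruct n as [|m]; [inversion H|]. simpl pred.
  unfold Psi. simpl. destruct (Psi_pair a b m) as [p0 p1]. simpl. reflexivity.
Qed.

Lemma Phi_rec a b n : (1 <= n)%nat ->
  Phi a b (S n) = (2*a - b) ^ (delta (S n)) * Phi a b n - a * Phi a b (pred n).
Proof.
  intros H. destruct n as [|m]; [inversion H|]. simpl pred.
  unfold Phi. simpl. destruct (Phi_pair a b m) as [p0 p1]. simpl. reflexivity.
Qed.

From Stdlib Require Import Reals Lia.
Open Scope R_scope.

(** Taking the recurrences two steps at a time removes the parity-dependent
    factor [(2a-b)^delta]: with the Lucas sequences [U], [V] of parameters
    [P = -b], [Q = a^2] one finds [Phi(2k) = U_k], [Phi(2k+1) = U_(k+1) + a U_k],
    [Psi(2k) = V_k] and [Psi(2k+1) = U_(k+1) - a U_k].  The theorem is then the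
    duplication formulas [U_(2k) = U_k V_k] and [U_(2k+1) = U_(k+1)^2 - Q U_k^2],
    both instances of the addition law [U_(m+n+1) = U_(m+1) U_(n+1) - Q U_m U_n]. *)

Fixpoint lucasU (P Q : R) (k : nat) : R :=
  match k with
  | O => 0
  | S k' => match k' with
            | O => 1
            | S k'' => P * lucasU P Q k' - Q * lucasU P Q k''
            end
  end.

Definition lucasV (P Q : R) (k : nat) : R :=
  2 * lucasU P Q (S k) - P * lucasU P Q k.

Lemma lucasU_SS P Q k :
  lucasU P Q (S (S k)) = P * lucasU P Q (S k) - Q * lucasU P Q k.
Proof. reflexivity. Qed.

Lemma lucasU_add P Q m n :
  lucasU P Q (S (m + n)) =
  lucasU P Q (S m) * lucasU P Q (S n) - Q * lucasU P Q m * lucasU P Q n.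
Proof.
  revert n; induction m as [|m IH]; intros n.
  - simpl. ring.
  - replace (S (S m + n)) with (S (m + S n)) by lia.
    rewrite IH, (lucasU_SS P Q n), (lucasU_SS P Q m). ring.
Qed.

Lemma lucasU_double P Q k :
  lucasU P Q (2 * k) = lucasU P Q k * lucasV P Q k.
Proof.
  unfold lucasV; destruct k as [|k].
  - simpl. ring.
  - replace (2 * S k)%nat with (S (S k + k)) by lia.
    rewrite lucasU_add, lucasU_SS. ring.
Qed.

Lemma lucasU_double_succ P Q k :
  lucasU P Q (S (2 * k)) = lucasU P Q (S k) ^ 2 - Q * lucasU P Q k ^ 2.
Proof.
  replace (2 * k)%nat with (k + k)%nat by lia.
  rewrite lucasU_add. ring.
Qed.

Lemma delta_SS n : delta (S (S n)) = delta n.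
Proof. reflexivity. Qed.

Lemma delta_double k : delta (2 * k) = 0%nat.
Proof.
  induction k as [|k IH]; [reflexivity|].
  replace (2 * S k)%nat with (S (S (2 * k))) by lia.
  rewrite delta_SS. exact IH.
Qed.

Lemma delta_double_succ k : delta (S (2 * k)) = 1%nat.
Proof.
  induction k as [|k IH]; [reflexivity|].
  replace (2 * S k)%nat with (S (S (2 * k))) by lia.
  rewrite delta_SS. exact IH.
Qed.

Lemma Phi_SS a b n :
  Phi a b (S (S n)) = (2*a - b) ^ delta (S (S n)) * Phi a b (S n) - a * Phi a b n.
Proof. apply Phi_rec. lia. Qed.

Lemma Psi_SS a b n :
  Psi a b (S (S n)) = (2*a - b) ^ delta (S n) * Psi a b (S n) - a * Psi a b n.
Proof. apply Psi_rec. lia. Qed.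

Section HalfIndex.

Variables a b : R.

Notation U := (lucasU (- b) (a * a)).
Notation V := (lucasV (- b) (a * a)).

Lemma Phi_double_and_succ k :
  Phi a b (2 * k) = U k /\ Phi a b (S (2 * k)) = U (S k) + a * U k.
Proof.
  induction k as [|k [IHe IHo]].
  - unfold Phi; simpl; split; ring.
  - assert (He : Phi a b (S (S (2 * k))) = U (S k)).
    { rewrite Phi_SS, delta_SS, delta_double, IHe, IHo, pow_O. ring. }
    replace (2 * S k)%nat with (S (S (2 * k))) by lia.
    split; [exact He|].
    rewrite Phi_SS, delta_SS, delta_double_succ, He, IHo, pow_1, lucasU_SS. ring.
Qed.

Lemma Psi_double_and_succ k :
  Psi a b (2 * k) = V k /\ Psi a b (S (2 * k)) = U (S k) - a * U k.
Proof.
  unfold lucasV.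
  induction k as [|k [IHe IHo]].
  - unfold Psi; simpl; split; ring.
  - assert (He : Psi a b (S (S (2 * k))) = 2 * U (S (S k)) + b * U (S k)).
    { rewrite Psi_SS, delta_double_succ, IHe, IHo, pow_1, lucasU_SS. ring. }
    replace (2 * S k)%nat with (S (S (2 * k))) by lia.
    split; [rewrite He; ring|].
    rewrite Psi_SS, delta_SS, delta_double, He, IHo, pow_O, lucasU_SS. ring.
Qed.

End HalfIndex.

Theorem theorem13p3 (a b : R) (n : nat) :
  a <> b -> a <> - b -> (1 <= n)%nat ->
  Phi a b (2 * n) = Phi a b n * Psi a b n.
Proof.
  intros _ _ _.
  destruct (Nat.Even_or_Odd n) as [[k ->] | [k ->]].
  - rewrite (proj1 (Phi_double_and_succ a b (2 * k))),
      (proj1 (Phi_double_and_succ a b k)), (proj1 (Psi_double_and_succ a b k)).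
    apply lucasU_double.
  - rewrite Nat.add_1_r, (proj1 (Phi_double_and_succ a b (S (2 * k)))),
      (proj2 (Phi_double_and_succ a b k)), (proj2 (Psi_double_and_succ a b k)),
      lucasU_double_succ.
    ring.
Qed.
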